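(* Let $F\colon S^2\to S^2$ be a Thurston map of degree $d$ with $k=\#\operatorname{post}(F)\ge3$ postcritical points, and let $\mathcal{C}\supset\operatorname{post}(F)$ be an oriented Jordan curve. Let $\gamma^0=E_0,\dots,E_{k-1}$ be the $0$-edges, positively oriented and listed in their cyclic order along $\mathcal{C}$. Let $\gamma^1=E'_0,\dots,E'_{kd-1}$ be any Eulerian circuit in the graph of $1$-edges. Then $F\colon\gamma^1\to\gamma^0$ is a $d$-fold cover if and only if every $1$-edge is positively oriented in $\gamma^1$ (i.e. traversed by $\gamma^1$ in its positive orientation).
   Context: A Thurston map is an orientation-preserving, postcritically finite branched covering of $S^2$. The postcritical points divide $\mathcal{C}$ into $k$ closed arcs, the $0$-edges; a $0$-edge is positively oriented if its orientation agrees with that of $\mathcal{C}$. The $1$-vertices are the points of $F^{-1}(\operatorname{post}(F))$; a $1$-edge is the closure of a component of $F^{-1}(\mathcal{C})\setminus F^{-1}(\operatorname{post}(F))$; there are $kd$ of them and $F$ maps each $1$-edge homeomorphically onto a $0$-edge. An oriented $1$-edge $E$ is positively oriented if $F$ maps its initial/terminal point to the initial/terminal point of the positively oriented $0$-edge $F(E)$. An Eulerian circuit in the graph of $1$-edges is a cyclic sequence of oriented $1$-edges $E'_0,\dots,E'_{kd-1}$ (indices mod $kd$) in which each $1$-edge appears exactly once and the terminal point of $E'_j$ is the initial point of $E'_{j+1}$; the $1$-edge in $\gamma^1$ then carries the orientation given by this traversal. $F\colon\gamma^1\to\gamma^0$ is called a $d$-fold cover if $F$ maps succeeding $1$-edges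 of $\gamma^1$ to succeeding $0$-edges of $\gamma^0$; equivalently, if with $m$ the index such that $F(E'_0)=E_m$, one has $F(E'_j)=E_{m+j}$ (indices mod $k$) for all $j=0,\dots,kd-1$. *)

From mathcomp Require Import all_boot.
Set Implicit Arguments. Unset Strict Implicit. Unset Printing Implicit Defensive.

(* Postcritical points p_0,...,p_{k-1} listed in the cyclic order of C are
   indexed by 'I_k; the positively oriented 0-edge E_m runs from p_m to
   p_{m+1} = p_(ordS m).  1-vertices form a finType V, Fv : V -> 'I_k is F on
   1-vertices (F(v) = p_(Fv v)); 1-edges form a finType E, Fe e = m means
   F(e) = E_m; endpt e true / endpt e false are the two endpoints of e. *)

Definition initial (V E : Type) (endpt : E -> bool -> V) (oe : E * bool) : V :=
  endpt oe.1 oe.2.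
Definition terminal (V E : Type) (endpt : E -> bool -> V) (oe : E * bool) : V :=
  endpt oe.1 (~~ oe.2).

(* F maps each 1-edge homeomorphically onto its 0-edge: its two endpoints go
   to the two endpoints p_m, p_{m+1} of E_m = F(e). *)
Definition edges_over (k : nat) (V E : Type) (Fv : V -> 'I_k) (Fe : E -> 'I_k)
  (endpt : E -> bool -> V) : Prop :=
  forall e : E, exists b : bool,
    Fv (endpt e b) = Fe e /\ Fv (endpt e (~~ b)) = ordS (Fe e).

Definition pos_oriented (k : nat) (V E : Type) (Fv : V -> 'I_k) (Fe : E -> 'I_k)
  (endpt : E -> bool -> V) (oe : E * bool) : Prop :=
  Fv (initial endpt oe) = Fe oe.1 /\ Fv (terminal endpt oe) = ordS (Fe oe.1).

Definition eulerian_circuit (N : nat) (V E : Type) (endpt : E -> bool -> V)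
  (c : 'I_N -> E * bool) : Prop :=
  bijective (fun j => (c j).1) /\
  forall j : 'I_N, terminal endpt (c j) = initial endpt (c (ordS j)).

(* F : gamma^1 -> gamma^0 is a d-fold cover: succeeding 1-edges of gamma^1
   are mapped to succeeding 0-edges of gamma^0 (cyclically). *)
Definition dfold_cover (N k : nat) (E : Type) (Fe : E -> 'I_k)
  (c : 'I_N -> E * bool) : Prop :=
  forall j : 'I_N, Fe (c (ordS j)).1 = ordS (Fe (c j).1).

(** A 1-edge over the 0-edge [E_m] is traversed either from a point over
    [p_m] to a point over [p_(m+1)] (positively) or the other way round.  The
    terminal point of a traversed edge is the initial point of the next one,
    so two consecutive edges over [E_m] and [E_(m+1)] in positive position
    make [F] advance by one step along [gamma^0].  Conversely, if [F] advances
    by one step but the first edge is traversed negatively, the shared vertex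
    lies over [p_m] and over [p_(m+1)] or [p_(m+2)]; both are impossible as
    soon as [k >= 3], since then [p_m], [p_(m+1)], [p_(m+2)] are distinct. *)

From mathcomp Require Import all_boot.

Set Implicit Arguments.
Unset Strict Implicit.
Unset Printing Implicit Defensive.

Lemma val_iter_ordS k (x : 'I_k) n : val (iter n (@ordS k) x) = (x + n) %% k.
Proof.
elim: n => [|n IHn] /=; first by rewrite addn0 modn_small.
by rewrite IHn addnS -addn1 modnDml addn1.
Qed.

Lemma iter_ordS_neq k (x : 'I_k) n : 0 < n < k -> iter n (@ordS k) x != x.
Proof.
case/andP=> n_gt0 n_ltk; apply/negP=> /eqP/(congr1 val).
rewrite val_iter_ordS => xn_x.
have /eqP : (x + n) %% k = (x + 0) %% k by rewrite xn_x addn0 modn_small.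
by rewrite eqn_modDl mod0n modn_small // => /eqP n0; rewrite n0 in n_gt0.
Qed.

Section Orientation.

Variables (k : nat) (V E : Type) (Fv : V -> 'I_k) (Fe : E -> 'I_k).
Variable endpt : E -> bool -> V.

Definition neg_oriented (oe : E * bool) : Prop :=
  Fv (initial endpt oe) = ordS (Fe oe.1) /\ Fv (terminal endpt oe) = Fe oe.1.

Lemma pos_or_neg_oriented (oe : E * bool) :
  edges_over Fv Fe endpt ->
  pos_oriented Fv Fe endpt oe \/ neg_oriented oe.
Proof.
case: oe => e b /(_ e) [b0 [over_b0 over_nb0]].
rewrite /pos_oriented /neg_oriented /initial /terminal /=.
by case: b; case: b0 over_b0 over_nb0; rewrite /= => -> ->; [left|right|right|left].
Qed.

Variables (N : nat) (c : 'I_N -> E * bool).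
Hypothesis c_chain : forall j : 'I_N,
  terminal endpt (c j) = initial endpt (c (ordS j)).

Lemma dfold_cover_of_pos_oriented :
  (forall j, pos_oriented Fv Fe endpt (c j)) -> dfold_cover Fe c.
Proof.
move=> pos j; have [_ <-] := pos j; have [<- _] := pos (ordS j).
by rewrite c_chain.
Qed.

Lemma pos_oriented_of_dfold_cover :
  2 < k -> edges_over Fv Fe endpt ->
  dfold_cover Fe c -> forall j, pos_oriented Fv Fe endpt (c j).
Proof.
move=> k_gt2 over cover j.
have [//|[_ neg_term]] := pos_or_neg_oriented (c j) over.
set m := Fe (c j).1 in neg_term cover.
have ordS_neq : ordS m != m := iter_ordS_neq m (n := 1) (ltnW k_gt2).
have ordS2_neq : ordS (ordS m) != m := iter_ordS_neq m (n := 2) k_gt2.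
have shared := c_chain j; have next_over := cover j.
case: (pos_or_neg_oriented (c (ordS j)) over) => [[init_next _]|[init_next _]].
- by move: ordS_neq; rewrite -next_over -init_next -shared neg_term eqxx.
- by move: ordS2_neq; rewrite -next_over -init_next -shared neg_term eqxx.
Qed.

End Orientation.

Theorem lemma3p6 (k d : nat) (V E : finType) (Fv : V -> 'I_k) (Fe : E -> 'I_k)
  (endpt : E -> bool -> V) :
  3 <= k -> 0 < d -> #|E| = k * d ->
  edges_over Fv Fe endpt ->
  forall c : 'I_(k * d) -> E * bool,
    eulerian_circuit endpt c ->
    (dfold_cover Fe c <-> forall j : 'I_(k * d), pos_oriented Fv Fe endpt (c j)).
Proof.
move=> k_ge3 _ _ over c [_ c_chain]; split.
- exact: pos_oriented_of_dfold_cover.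
- exact: dfold_cover_of_pos_oriented.
Qed.
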